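(* Let $\kappa$ be an infinite cardinal and let $\alpha$ be an uncountable cardinal with $\alpha\leq\kappa^+$. Let $h:P(\kappa,\alpha)\to\mathbb{Z}$ be a group homomorphism. Then there are only finitely many $\xi\in\kappa$ such that $h(e_\xi)\neq0$.
   Context: $\mathbb{Z}^\kappa$ is the group of functions $x:\kappa\to\mathbb{Z}$ under pointwise addition, $\mathrm{supp}(x)=\{\xi\in\kappa:x(\xi)\neq0\}$, and $P(\kappa,\alpha)=\{x\in\mathbb{Z}^\kappa:|\mathrm{supp}(x)|<\alpha\}$. For $\xi\in\kappa$, $e_\xi\in P(\kappa,\alpha)$ is defined by $e_\xi(\xi)=1$ and $e_\xi(\eta)=0$ for $\eta\neq\xi$. *)

(* Cardinals are represented by types; cardinal comparison via injections. *)
From Stdlib Require Import ZArith List ClassicalEpsilon.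
Open Scope Z_scope.

Definition card_le (A B : Type) : Prop := exists f : A -> B, forall a a', f a = f a' -> a = a'.
Definition card_lt (A B : Type) : Prop := card_le A B /\ ~ card_le B A.

Definition infinite_card (K : Type) : Prop := card_le nat K.
Definition uncountable_card (A : Type) : Prop := ~ card_le A nat.

Definition is_succ_card (K L : Type) : Prop :=
  card_lt K L /\ forall M : Type, card_lt K M -> card_le L M.

Definition supp {K : Type} (x : K -> Z) : Type := { xi : K | x xi <> 0 }.

(* x \in P(kappa, alpha), alpha = |A| *)
Definition inP (K A : Type) (x : K -> Z) : Prop := card_lt (supp x) A.

Definition zadd {K : Type} (x y : K -> Z) : K -> Z := fun xi => x xi + y xi.

Definition e {K : Type} (xi : K) : K -> Z :=
  fun eta => if excluded_middle_informative (eta = xi) then 1 else 0.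

(** If infinitely many [h (e xi)]
    were nonzero, pick an injective sequence [xi_0, xi_1, ...] of such
    coordinates.  Every vector supported on [{xi_n}] has countable support, hence
    lies in [P(kappa, alpha)], so [h] restricts to an additive map [g : Z^N -> Z]
    with [g (delta_n) <> 0] for all [n].  Specker's argument rules this out: for
    weights [m_n] with [m_n | m_(n+1)] growing fast enough, the vector [m] splits
    as the prefix [m_0, ..., m_(n-1)] plus [m_n] times an integer vector, so
    [g m] is congruent modulo [m_n] to the small number [g (prefix n)]; for large
    [n] this forces [g (prefix n) = g m = g (prefix (n+1))], i.e.
    [m_n * g (delta_n) = 0]. *)
From Stdlib Require Import ZArith List Lia Classical ClassicalEpsilon
  FunctionalExtensionality ProofIrrelevance.
Open Scope Z_scope.

Lemma card_le_trans (A B C : Type) : card_le A B -> card_le B C -> card_le A C.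
Proof.
  intros [f Hf] [g Hg]. exists (fun a => g (f a)). auto.
Qed.

Lemma unlisted_of_not_listed (T : Type) (P : T -> Prop) :
  ~ (exists l : list T, forall t, P t -> In t l) ->
  forall l : list T, exists t, P t /\ ~ In t l.
Proof.
  intros Hnot l. apply NNPP. intros C. apply Hnot. exists l. intros t Ht.
  apply NNPP. intros Hl. apply C. eauto.
Qed.

Section UnlistedSequence.
Variables (T : Type) (P : T -> Prop).
Hypothesis unlisted : forall l : list T, exists t, P t /\ ~ In t l.

Definition fresh (l : list T) : T :=
  proj1_sig (constructive_indefinite_description _ (unlisted l)).

Lemma fresh_spec (l : list T) : P (fresh l) /\ ~ In (fresh l) l.
Proof. exact (proj2_sig (constructive_indefinite_description _ (unlisted l))). Qed.

Fixpoint fresh_prefix (n : nat) : list T :=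
  match n with O => nil | S n => fresh (fresh_prefix n) :: fresh_prefix n end.

Lemma fresh_in_prefix (k n : nat) : (k < n)%nat -> In (fresh (fresh_prefix k)) (fresh_prefix n).
Proof.
  induction n as [|n IH]; intros Hk; [lia|].
  destruct (Nat.eq_dec k n) as [->|Hkn]; [now left|].
  right. apply IH. lia.
Qed.

Lemma unlisted_injective_seq :
  exists s : nat -> T, (forall a b, s a = s b -> a = b) /\ forall n, P (s n).
Proof.
  exists (fun n => fresh (fresh_prefix n)). split.
  - intros a b E. destruct (Nat.lt_total a b) as [Hab|[Hab|Hab]]; auto; exfalso.
    + apply (proj2 (fresh_spec (fresh_prefix b))). rewrite <- E. now apply fresh_in_prefix.
    + apply (proj2 (fresh_spec (fresh_prefix a))). rewrite E. now apply fresh_in_prefix.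
  - intros n. apply fresh_spec.
Qed.

End UnlistedSequence.

Fixpoint list_index {T : Type} (l : list T) (a : T) : nat :=
  match l with
  | nil => O
  | x :: l => if excluded_middle_informative (x = a) then O else S (list_index l a)
  end.

Lemma list_index_inj {T : Type} (l : list T) (a b : T) :
  In a l -> In b l -> list_index l a = list_index l b -> a = b.
Proof.
  induction l as [|x l IH]; simpl; [tauto|].
  destruct (excluded_middle_informative (x = a)), (excluded_middle_informative (x = b));
    try congruence.
  intros [|] [|] E; try congruence. injection E; auto.
Qed.

Lemma uncountable_card_le_nat (A : Type) : uncountable_card A -> card_le nat A.
Proof.
  intros HA. destruct (classic (exists l : list A, forall a, True -> In a l)) as [[l Hl]|Hn].
  - exfalso. apply HA. exists (list_index l). intros a b. apply list_index_inj; auto.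
  - destruct (unlisted_injective_seq A _ (unlisted_of_not_listed A _ Hn)) as [s [Hs _]].
    now exists s.
Qed.

Lemma countable_lt_uncountable (X A : Type) :
  card_le X nat -> uncountable_card A -> card_lt X A.
Proof.
  intros HX HA. split.
  - exact (card_le_trans _ _ _ HX (uncountable_card_le_nat A HA)).
  - intros HAX. exact (HA (card_le_trans _ _ _ HAX HX)).
Qed.

Definition delta (n : nat) : nat -> Z := fun k => if Nat.eq_dec k n then 1 else 0.

Definition prefix (m : nat -> Z) (n : nat) : nat -> Z :=
  fun k => if lt_dec k n then m k else 0.

Fixpoint wsum (m d : nat -> Z) (n : nat) : Z :=
  match n with O => 0 | S n => wsum m d n + m n * Z.abs (d n) end.

Lemma prefix_succ (m : nat -> Z) (n : nat) :
  prefix m (S n) = fun k => prefix m n k + m n * delta n k.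
Proof.
  extensionality k. unfold prefix, delta.
  destruct (lt_dec k n), (lt_dec k (S n)), (Nat.eq_dec k n); subst; lia.
Qed.

(* Pairs [(m_n, wsum m d n)], with [m_(n+1) = m_n * (2 * wsum m d (n+1) + 2)]. *)
Fixpoint specker_weights (d : nat -> Z) (n : nat) : Z * Z :=
  match n with
  | O => (1, 0)
  | S n =>
      let (m, s) := specker_weights d n in
      let s' := s + m * Z.abs (d n) in (m * (2 * s' + 2), s')
  end.

Lemma specker_weights_spec (d : nat -> Z) :
  exists m : nat -> Z,
    (forall n, 0 < m n) /\ (forall n, (m n | m (S n))) /\
    (forall n, Z.of_nat n < m n) /\ (forall n, 2 * wsum m d n < m n).
Proof.
  set (m n := fst (specker_weights d n)).
  assert (Hsum : forall n, wsum m d n = snd (specker_weights d n)).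
  { induction n as [|n IH]; [reflexivity|].
    simpl. rewrite IH. unfold m. destruct (specker_weights d n); reflexivity. }
  assert (Hstep : forall n, m (S n) = m n * (2 * wsum m d (S n) + 2)).
  { intros n. rewrite Hsum. unfold m. simpl. destruct (specker_weights d n); reflexivity. }
  assert (Hbound : forall n, 0 <= wsum m d n /\ Z.of_nat n < m n /\ 2 * wsum m d n < m n).
  { induction n as [|n (IHnn & IHlt & IHsum)]; [repeat split; reflexivity|].
    rewrite Hstep. simpl wsum. pose proof (Z.abs_nonneg (d n)).
    pose proof (Nat2Z.is_nonneg n). assert (0 <= m n * Z.abs (d n)) by nia.
    rewrite Nat2Z.inj_succ. repeat split; nia. }
  exists m. repeat split; intros n.
  2: { rewrite Hstep. apply Z.divide_factor_l. }
  all: pose proof (Hbound n); lia.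
Qed.

Lemma divide_of_chain (m : nat -> Z) (n k : nat) :
  (forall n, (m n | m (S n))) -> (n <= k)%nat -> (m n | m k).
Proof.
  intros Hdiv. induction 1; [apply Z.divide_refl|].
  eapply Z.divide_trans; eauto.
Qed.

Lemma eq_of_small_congruent (a b c y : Z) :
  a = b + c * y -> 2 * Z.abs a < c -> 2 * Z.abs b < c -> a = b.
Proof.
  intros E Ha Hb. destruct (Z.lt_total y 0) as [Hy|[Hy|Hy]]; subst; [|lia|]; nia.
Qed.

Section Specker.
Variable g : (nat -> Z) -> Z.
Hypothesis g_add : forall u v, g (fun k => u k + v k) = g u + g v.

Lemma g_zero : g (fun _ => 0) = 0.
Proof. pose proof (g_add (fun _ => 0) (fun _ => 0)). simpl in *. lia. Qed.

Lemma g_scale_nat (c : nat) (u : nat -> Z) : g (fun k => Z.of_nat c * u k) = Z.of_nat c * g u.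
Proof.
  induction c as [|c IH]; [exact g_zero|].
  replace (fun k => Z.of_nat (S c) * u k) with (fun k => Z.of_nat c * u k + u k)
    by (extensionality k; lia).
  rewrite g_add, IH. lia.
Qed.

Lemma g_scale (c : Z) (u : nat -> Z) : 0 <= c -> g (fun k => c * u k) = c * g u.
Proof. intros Hc. rewrite <- (Z2Nat.id c Hc). apply g_scale_nat. Qed.

Lemma g_prefix_succ (m : nat -> Z) (n : nat) :
  0 <= m n -> g (prefix m (S n)) = g (prefix m n) + m n * g (delta n).
Proof. intros Hm. rewrite prefix_succ, g_add, g_scale by exact Hm. reflexivity. Qed.

Lemma g_prefix_bound (m : nat -> Z) (n : nat) :
  (forall k, 0 <= m k) -> Z.abs (g (prefix m n)) <= wsum m (fun k => g (delta k)) n.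
Proof.
  intros Hm. induction n as [|n IH].
  - replace (prefix m 0) with (fun _ : nat => 0).
    + rewrite g_zero. simpl. lia.
    + extensionality k. unfold prefix. destruct (lt_dec k 0); lia.
  - rewrite g_prefix_succ by apply Hm. simpl wsum.
    pose proof (Z.abs_triangle (g (prefix m n)) (m n * g (delta n))).
    rewrite Z.abs_mul, (Z.abs_eq (m n)) in * by apply Hm. lia.
Qed.

(* [m = prefix m n + m_n * (m_k / m_n)_(k >= n)]. *)
Lemma g_congruent_prefix (m : nat -> Z) (n : nat) :
  (forall n, 0 < m n) -> (forall n, (m n | m (S n))) ->
  exists y, g m = g (prefix m n) + m n * y.
Proof.
  intros Hpos Hdiv.
  exists (g (fun k => if lt_dec k n then 0 else m k / m n)).
  rewrite <- g_scale, <- g_add by (pose proof (Hpos n); lia). f_equal.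
  extensionality k. unfold prefix. destruct (lt_dec k n); [lia|].
  destruct (divide_of_chain m n k Hdiv) as [q Hq]; [lia|].
  pose proof (Hpos n). rewrite Hq, Z.div_mul by lia. lia.
Qed.

Theorem additive_delta_zero : exists n, g (delta n) = 0.
Proof.
  destruct (specker_weights_spec (fun k => g (delta k)))
    as (m & Hpos & Hdiv & Hgrow & Hsmall).
  assert (Hnn : forall k, 0 <= m k) by (intros k; pose proof (Hpos k); lia).
  set (N := Z.to_nat (2 * Z.abs (g m))).
  assert (HN : 2 * Z.abs (g m) = Z.of_nat N) by (unfold N; rewrite Z2Nat.id; lia).
  assert (Hprefix : forall n, (N <= n)%nat -> g m = g (prefix m n)).
  { intros n Hn. destruct (g_congruent_prefix m n Hpos Hdiv) as [y Hy].
    apply (eq_of_small_congruent _ _ _ _ Hy).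
    - pose proof (Hgrow n). lia.
    - pose proof (g_prefix_bound m n Hnn). pose proof (Hsmall n). lia. }
  exists N.
  pose proof (Hprefix N (le_n N)). pose proof (Hprefix (S N) (le_S _ _ (le_n N))).
  rewrite g_prefix_succ in * by apply Hnn.
  pose proof (Hpos N). nia.
Qed.

End Specker.

Section PushForward.
Variables (K : Type) (s : nat -> K).
Hypothesis s_inj : forall a b, s a = s b -> a = b.

Definition preimage (xi : K) : option nat :=
  match excluded_middle_informative (exists k, s k = xi) with
  | left H => Some (proj1_sig (constructive_indefinite_description _ H))
  | right _ => None
  end.

Lemma preimage_some (xi : K) (k : nat) : preimage xi = Some k -> s k = xi.
Proof.
  unfold preimage. destruct excluded_middle_informative as [H|H]; [|discriminate].
  destruct (constructive_indefinite_description _ H) as [j Hj]. simpl. congruence.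
Qed.

Lemma preimage_s (k : nat) : preimage (s k) = Some k.
Proof.
  unfold preimage. destruct excluded_middle_informative as [H|H]; [|exfalso; eauto].
  destruct (constructive_indefinite_description _ H) as [j Hj]. simpl.
  apply s_inj in Hj. congruence.
Qed.

Definition push (u : nat -> Z) : K -> Z :=
  fun xi => match preimage xi with Some k => u k | None => 0 end.

Lemma push_add (u v : nat -> Z) : push (fun k => u k + v k) = zadd (push u) (push v).
Proof. extensionality xi. unfold push, zadd. destruct (preimage xi); reflexivity. Qed.

Lemma push_delta (n : nat) : push (delta n) = e (s n).
Proof.
  extensionality xi. unfold push, e, delta.
  destruct (preimage xi) as [k|] eqn:E.
  - apply preimage_some in E. subst xi.
    destruct (excluded_middle_informative (s k = s n)) as [Hs|Hs].
    + apply s_inj in Hs. subst k. destruct (Nat.eq_dec n n); congruence.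
    + destruct (Nat.eq_dec k n); congruence.
  - destruct (excluded_middle_informative (xi = s n)) as [->|]; [|reflexivity].
    rewrite preimage_s in E. discriminate.
Qed.

Lemma supp_push_countable (u : nat -> Z) : card_le (supp (push u)) nat.
Proof.
  set (index xi := match preimage xi with Some k => k | None => O end).
  assert (Hindex : forall a b, push u a <> 0 -> push u b <> 0 -> index a = index b -> a = b).
  { intros a b Ha Hb. unfold index. unfold push in Ha, Hb.
    destruct (preimage a) as [ka|] eqn:Ea; [|contradiction].
    destruct (preimage b) as [kb|] eqn:Eb; [|contradiction].
    apply preimage_some in Ea, Eb. congruence. }
  exists (fun p => index (proj1_sig p)).
  intros [a Ha] [b Hb] E. simpl in E.
  destruct (Hindex a b Ha Hb E). f_equal. apply proof_irrelevance.
Qed.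

End PushForward.

Theorem mainTheorem7 (K A L : Type)
  (HK : infinite_card K) (HA : uncountable_card A)
  (HL : is_succ_card K L) (HAL : card_le A L)
  (h : (K -> Z) -> Z)
  (hhom : forall x y, inP K A x -> inP K A y -> h (zadd x y) = h x + h y) :
  exists s : list K, forall xi : K, h (e xi) <> 0 -> In xi s.
Proof.
  apply NNPP. intros Hinfinite.
  destruct (unlisted_injective_seq K _ (unlisted_of_not_listed K _ Hinfinite))
    as [s [s_inj Hs]].
  assert (HinP : forall u, inP K A (push K s u)).
  { intros u. exact (countable_lt_uncountable _ _ (supp_push_countable K s u) HA). }
  destruct (additive_delta_zero (fun u => h (push K s u))) as [n Hn].
  - intros u v. rewrite push_add. apply hhom; apply HinP.
  - apply (Hs n). rewrite <- push_delta by exact s_inj. exact Hn.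
Qed.
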